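(* Let $\Gamma$ be a NoEff typing context, $\mathit{t},\mathit{t}'$ NoEff terms and $A$ a NoEff type. If $\Gamma \vdash \mathit{t} : A$ and $\mathit{t} \leadsto \mathit{t}'$, then $\Gamma \vdash \mathit{t}' : A$.
   Context: NoEff. Fix a signature $\Sigma$ assigning to each operation $\mathtt{Op}$ two closed well-formed NoEff types, $(\mathtt{Op}:A_1\to A_2)\in\Sigma$. Types $A,B ::= \alpha\mid\mathtt{Unit}\mid A\to B\mid A\Rrightarrow B\mid\mu\Rightarrow A\mid\mathtt{Comp}\,A\mid\forall\alpha.A$; coercion types $\mu ::= A\le B$. Coercions $\gamma ::= \omega\mid\langle\mathtt{Unit}\rangle\mid\langle\alpha\rangle\mid\gamma_1\to\gamma_2\mid\gamma_1\Rrightarrow\gamma_2\mid\mathtt{handToFun}(\gamma_1,\gamma_2)\mid\mathtt{funToHand}(\gamma_1,\gamma_2)\mid\forall\alpha.\gamma\mid\mu\Rightarrow\gamma\mid\mathtt{Comp}\,\gamma\mid\mathtt{return}\,\gamma\mid\mathtt{unsafe}\,\gamma$. Terms $\mathit{t} ::= x\mid\mathtt{unit}\mid\lambda(x{:}A).\mathit{t}\mid\mathit{t}_1\,\mathit{t}_2\mid\Lambda\alpha.\mathit{t}\mid\mathit{t}\,A\mid\Lambda(\omega{:}\mu).\mathit{t}\mid\mathit{t}\,\gamma\mid\mathit{t}\triangleright\gamma\mid\mathtt{return}\,\mathit{t}\mid h\mid\mathtt{let}\,x=\mathit{t}_1\,\mathtt{in}\,\mathit{t}_2\mid\mathtt{Op}\,\mathit{t}_1\,(y{:}B.\mathit{t}_2)\mid\mathtt{do}\,x\leftarrow\mathit{t}_1;\mathit{t}_2\mid\mathtt{with}\,\mathit{t}_h\,\mathtt{handle}\,\mathit{t}_c$;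 handlers $h ::= \{\mathtt{return}\,(x{:}A)\mapsto\mathit{t}_r,\mathtt{Op}_1\,x\,k\mapsto\mathit{t}_{\mathtt{Op}_1},\dots,\mathtt{Op}_n\,x\,k\mapsto\mathit{t}_{\mathtt{Op}_n}\}$ (distinct $\mathtt{Op}_i$, $\mathcal{O}=\{\mathtt{Op}_i\}$). Contexts $\Gamma ::= \epsilon\mid\Gamma,\alpha\mid\Gamma,x{:}A\mid\Gamma,\omega{:}\mu$; terms up to $\alpha$-equivalence, capture-avoiding substitution. Well-formedness: $\Gamma\vdash\alpha$ if $\alpha\in\Gamma$; $\Gamma\vdash\mathtt{Unit}$; $\Gamma\vdash A\to B$, $\Gamma\vdash A\Rrightarrow B$ if $\Gamma\vdash A$ and $\Gamma\vdash B$; $\Gamma\vdash\mathtt{Comp}\,A$ if $\Gamma\vdash A$; $\Gamma\vdash\forall\alpha.A$ if $\Gamma,\alpha\vdash A$; $\Gamma\vdash\mu\Rightarrow A$ if $\Gamma\vdash\mu$ and $\Gamma\vdash A$; $\Gamma\vdash A\le B$ if $\Gamma\vdash A$ and $\Gamma\vdash B$. Coercion typing $\Gamma\vdash\gamma:\mu$: $\omega:\mu$ if $(\omega{:}\mu)\in\Gamma$; $\langle\mathtt{Unit}\rangle:\mathtt{Unit}\le\mathtt{Unit}$; $\langle\alpha\rangle:\alpha\le\alpha$ if $\alpha\in\Gamma$; $\gamma_1\to\gamma_2:(A_1\to B_1)\le(A_2\to B_2)$ if $\gamma_1:A_2\le A_1$, $\gamma_2:B_1\le B_2$; $\gamma_1\Rrightarrow\gamma_2:(A_1\Rrightarrow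 B_1)\le(A_2\Rrightarrow B_2)$ if $\gamma_1:\mathtt{Comp}\,A_2\le\mathtt{Comp}\,A_1$, $\gamma_2:\mathtt{Comp}\,B_1\le\mathtt{Comp}\,B_2$; $\mathtt{handToFun}(\gamma_1,\gamma_2):(A_1\Rrightarrow B_1)\le(A_2\to B_2)$ if $\gamma_1:A_2\le A_1$, $\gamma_2:\mathtt{Comp}\,B_1\le B_2$; $\mathtt{funToHand}(\gamma_1,\gamma_2):(A_1\to B_1)\le(A_2\Rrightarrow B_2)$ if $\gamma_1:A_2\le A_1$, $\gamma_2:B_1\le\mathtt{Comp}\,B_2$; $\forall\alpha.\gamma:\forall\alpha.A\le\forall\alpha.B$ if $\Gamma,\alpha\vdash\gamma:A\le B$; $\mu\Rightarrow\gamma:(\mu\Rightarrow A)\le(\mu\Rightarrow B)$ if $\Gamma\vdash\mu$, $\gamma:A\le B$; $\mathtt{Comp}\,\gamma:\mathtt{Comp}\,A_1\le\mathtt{Comp}\,A_2$ if $\gamma:A_1\le A_2$; $\mathtt{return}\,\gamma:A_1\le\mathtt{Comp}\,A_2$ if $\gamma:A_1\le A_2$; $\mathtt{unsafe}\,\gamma:\mathtt{Comp}\,A_1\le A_2$ if $\gamma:A_1\le A_2$. Term typing $\Gamma\vdash\mathit{t}:A$: $x:A$ if $(x{:}A)\in\Gamma$; $\mathtt{unit}:\mathtt{Unit}$; $\lambda(x{:}A).\mathit{t}:A\to B$ if $\Gamma\vdash A$ and $\Gamma,x{:}A\vdash\mathit{t}:B$; $\Lambda\alpha.\mathit{t}:\forall\alpha.A$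 if $\Gamma,\alpha\vdash\mathit{t}:A$; $\mathit{t}\,A:B[A/\alpha]$ if $\Gamma\vdash A$ and $\mathit{t}:\forall\alpha.B$; $\mathit{t}\triangleright\gamma:B$ if $\mathit{t}:A$ and $\gamma:A\le B$; $h:A\Rrightarrow B$ if $\Gamma,x{:}A\vdash\mathit{t}_r:\mathtt{Comp}\,B$ and for each $\mathtt{Op}\in\mathcal{O}$, $(\mathtt{Op}:A_1\to A_2)\in\Sigma$ and $\Gamma,x{:}A_1,k{:}A_2\to\mathtt{Comp}\,B\vdash\mathit{t}_{\mathtt{Op}}:\mathtt{Comp}\,B$; $\Lambda(\omega{:}\mu).\mathit{t}:\mu\Rightarrow A$ if $\Gamma\vdash\mu$ and $\Gamma,\omega{:}\mu\vdash\mathit{t}:A$; $\mathit{t}\,\gamma:A$ if $\mathit{t}:\mu\Rightarrow A$, $\gamma:\mu$; $\mathit{t}_1\,\mathit{t}_2:B$ if $\mathit{t}_1:A\to B$, $\mathit{t}_2:A$; $\mathtt{let}\,x=\mathit{t}_1\,\mathtt{in}\,\mathit{t}_2:B$ if $\mathit{t}_1:A$, $\Gamma,x{:}A\vdash\mathit{t}_2:B$; $\mathtt{return}\,\mathit{t}:\mathtt{Comp}\,A$ if $\mathit{t}:A$; $\mathtt{Op}\,\mathit{t}_1\,(y{:}A_2.\mathit{t}_2):\mathtt{Comp}\,B$ if $(\mathtt{Op}:A_1\to A_2)\in\Sigma$, $\mathit{t}_1:A_1$, $\Gamma,y{:}A_2\vdash\mathit{t}_2:\mathtt{Comp}\,B$;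 $\mathtt{do}\,x\leftarrow\mathit{t}_1;\mathit{t}_2:\mathtt{Comp}\,B$ if $\mathit{t}_1:\mathtt{Comp}\,A$, $\Gamma,x{:}A\vdash\mathit{t}_2:\mathtt{Comp}\,B$; $\mathtt{with}\,\mathit{t}_h\,\mathtt{handle}\,\mathit{t}_c:\mathtt{Comp}\,B$ if $\mathit{t}_h:A\Rrightarrow B$, $\mathit{t}_c:\mathtt{Comp}\,A$. Values $\mathit{t}^R ::= \mathtt{unit}\mid h\mid\lambda(x{:}A).\mathit{t}\mid\Lambda\alpha.\mathit{t}\mid\Lambda(\omega{:}\mu).\mathit{t}\mid\mathit{t}^R\triangleright(\gamma_1\to\gamma_2)\mid\mathit{t}^R\triangleright(\gamma_1\Rrightarrow\gamma_2)\mid\mathit{t}^R\triangleright\mathtt{handToFun}(\gamma_1,\gamma_2)\mid\mathit{t}^R\triangleright\mathtt{funToHand}(\gamma_1,\gamma_2)\mid\mathit{t}^R\triangleright\forall\alpha.\gamma\mid\mathit{t}^R\triangleright(\mu\Rightarrow\gamma)\mid\mathtt{return}\,\mathit{t}^R\mid\mathtt{Op}\,\mathit{t}^R\,(y{:}A.\mathit{t})$. Step relation $\mathit{t}\leadsto\mathit{t}'$: congruences — if $\mathit{t}\leadsto\mathit{t}'$ then it steps in the positions $\square\,\mathit{t}_2$, $\mathit{t}^R\,\square$, $\square\,A$, $\square\,\gamma$, $\mathtt{let}\,x=\square\,\mathtt{in}\,\mathit{t}_2$, $\mathtt{return}\,\square$, $\mathtt{Op}\,\square\,(y{:}B.\mathit{t}_2)$,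 $\mathtt{do}\,x\leftarrow\square;\mathit{t}_2$, $\mathtt{with}\,\square\,\mathtt{handle}\,\mathit{t}_c$, $\mathtt{with}\,\mathit{t}^R_h\,\mathtt{handle}\,\square$, $\square\triangleright\gamma$. Reductions: $(\lambda(x{:}A).\mathit{t})\,\mathit{t}^R\leadsto\mathit{t}[\mathit{t}^R/x]$; $(\Lambda\alpha.\mathit{t})\,A\leadsto\mathit{t}[A/\alpha]$; $(\Lambda(\omega{:}\mu).\mathit{t})\,\gamma\leadsto\mathit{t}[\gamma/\omega]$; $\mathtt{let}\,x=\mathit{t}^R\,\mathtt{in}\,\mathit{t}\leadsto\mathit{t}[\mathit{t}^R/x]$; $\mathtt{do}\,x\leftarrow\mathtt{return}\,\mathit{t}^R;\mathit{t}\leadsto\mathit{t}[\mathit{t}^R/x]$; $\mathtt{do}\,x\leftarrow\mathtt{Op}\,\mathit{t}^R\,(y{:}A.\mathit{t}_1);\mathit{t}_2\leadsto\mathtt{Op}\,\mathit{t}^R\,(y{:}A.\,\mathtt{do}\,x\leftarrow\mathit{t}_1;\mathit{t}_2)$; $\mathtt{with}\,h\,\mathtt{handle}\,(\mathtt{return}\,\mathit{t}^R)\leadsto\mathit{t}_r[\mathit{t}^R/x]$; $\mathtt{with}\,h\,\mathtt{handle}\,(\mathtt{Op}\,\mathit{t}^R\,(y{:}B.\mathit{t}))\leadsto\mathit{t}_{\mathtt{Op}}[\mathit{t}^R/x,(\lambda(y{:}B).\mathtt{with}\,h\,\mathtt{handle}\,\mathit{t})/k]$ if $h$ has clause $\mathtt{Op}\,x\,k\mapsto\mathit{t}_{\mathtt{Op}}$,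 else $\leadsto\mathtt{Op}\,\mathit{t}^R\,(y{:}B.\,\mathtt{with}\,h\,\mathtt{handle}\,\mathit{t})$; $\mathit{t}^R\triangleright\langle\mathtt{Unit}\rangle\leadsto\mathit{t}^R$; $(\mathtt{return}\,\mathit{t}^R)\triangleright\mathtt{Comp}\,\gamma\leadsto\mathtt{return}\,(\mathit{t}^R\triangleright\gamma)$; $(\mathtt{Op}\,\mathit{t}^R\,(y{:}B.\mathit{t}))\triangleright\mathtt{Comp}\,\gamma\leadsto\mathtt{Op}\,\mathit{t}^R\,(y{:}B.\,\mathit{t}\triangleright\mathtt{Comp}\,\gamma)$; $\mathit{t}^R\triangleright\mathtt{return}\,\gamma\leadsto\mathtt{return}\,(\mathit{t}^R\triangleright\gamma)$; $(\mathtt{return}\,\mathit{t}^R)\triangleright\mathtt{unsafe}\,\gamma\leadsto\mathit{t}^R\triangleright\gamma$; $(\mathit{t}^R\triangleright(\gamma_1\to\gamma_2))\,\mathit{t}\leadsto(\mathit{t}^R\,(\mathit{t}\triangleright\gamma_1))\triangleright\gamma_2$; $\mathtt{with}\,(\mathit{t}^R_2\triangleright(\gamma_1\Rrightarrow\gamma_2))\,\mathtt{handle}\,\mathit{t}^R_1\leadsto(\mathtt{with}\,\mathit{t}^R_2\,\mathtt{handle}\,(\mathit{t}^R_1\triangleright\gamma_1))\triangleright\gamma_2$; $(\mathit{t}^R_1\triangleright\mathtt{handToFun}(\gamma_1,\gamma_2))\,\mathit{t}^R_2\leadsto(\mathtt{with}\,\mathit{t}^R_1\,\mathtt{handle}\,(\mathtt{return}\,(\mathit{t}^R_2\triangleright\gamma_1)))\triangleright\gamma_2$;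 $\mathtt{with}\,(\mathit{t}^R_2\triangleright\mathtt{funToHand}(\gamma_1,\gamma_2))\,\mathtt{handle}\,(\mathtt{Op}\,\mathit{t}^R_1\,(y{:}B.\mathit{t}))\leadsto\mathtt{Op}\,\mathit{t}^R_1\,(y{:}B.\,\mathtt{with}\,(\mathit{t}^R_2\triangleright\mathtt{funToHand}(\gamma_1,\gamma_2))\,\mathtt{handle}\,\mathit{t})$; $\mathtt{with}\,(\mathit{t}^R_2\triangleright\mathtt{funToHand}(\gamma_1,\gamma_2))\,\mathtt{handle}\,(\mathtt{return}\,\mathit{t}^R_1)\leadsto(\mathit{t}^R_2\,(\mathit{t}^R_1\triangleright\gamma_1))\triangleright\gamma_2$; $(\mathit{t}^R\triangleright\forall\alpha.\gamma)\,A\leadsto(\mathit{t}^R\,A)\triangleright\gamma[A/\alpha]$; $(\mathit{t}^R\triangleright(\mu\Rightarrow\gamma_1))\,\gamma_2\leadsto(\mathit{t}^R\,\gamma_2)\triangleright\gamma_1$. *)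

From mathcomp Require Import all_boot.
Set Implicit Arguments. Unset Strict Implicit. Unset Printing Implicit Defensive.

Inductive ty : Type :=
| TVar  : nat -> ty
| TUnit : ty
| TArr  : ty -> ty -> ty
| THand : ty -> ty -> ty
| TQual : ty -> ty -> ty -> ty    (* (A <= B) => C *)
| TComp : ty -> ty
| TAll  : ty -> ty.               (* forall alpha. A  (binds TVar 0) *)

(* coercion types  mu ::= A <= B *)
Definition cty := (ty * ty)%type.

Fixpoint ty_shift (c : nat) (A : ty) : ty :=
  match A with
  | TVar n => TVar (if n < c then n else n.+1)
  | TUnit => TUnit
  | TArr A B => TArr (ty_shift c A) (ty_shift c B)
  | THand A B => THand (ty_shift c A) (ty_shift c B)
  | TQual A B C => TQual (ty_shift c A) (ty_shift c B) (ty_shift c C)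
  | TComp A => TComp (ty_shift c A)
  | TAll A => TAll (ty_shift c.+1 A)
  end.

(* capture-avoiding substitution A[S/k] (and removal of variable k) *)
Fixpoint ty_subst (k : nat) (S : ty) (A : ty) : ty :=
  match A with
  | TVar n => if n < k then TVar n else if n == k then S else TVar n.-1
  | TUnit => TUnit
  | TArr A B => TArr (ty_subst k S A) (ty_subst k S B)
  | THand A B => THand (ty_subst k S A) (ty_subst k S B)
  | TQual A B C => TQual (ty_subst k S A) (ty_subst k S B) (ty_subst k S C)
  | TComp A => TComp (ty_subst k S A)
  | TAll A => TAll (ty_subst k.+1 (ty_shift 0 S) A)
  end.

Fixpoint wf_ty (n : nat) (A : ty) : Prop :=
  match A with
  | TVar a => a < n
  | TUnit => True
  | TArr A B => wf_ty n A /\ wf_ty n B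
  | THand A B => wf_ty n A /\ wf_ty n B
  | TQual A B C => (wf_ty n A /\ wf_ty n B) /\ wf_ty n C
  | TComp A => wf_ty n A
  | TAll A => wf_ty n.+1 A
  end.

Definition wf_cty (n : nat) (mu : cty) : Prop := wf_ty n mu.1 /\ wf_ty n mu.2.

Inductive co : Type :=
| CVar       : nat -> co
| CUnit      : co
| CTVar      : nat -> co
| CArr       : co -> co -> co
| CHand      : co -> co -> co
| CHandToFun : co -> co -> co
| CFunToHand : co -> co -> co
| CAll       : co -> co               (* forall alpha. g  (binds TVar 0) *)
| CQual      : ty -> ty -> co -> co
| CComp      : co -> co
| CRet       : co -> co
| CUnsafe    : co -> co.

Fixpoint co_shift_ty (c : nat) (g : co) : co :=
  match g with
  | CVar w => CVar w
  | CUnit => CUnit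
  | CTVar n => CTVar (if n < c then n else n.+1)
  | CArr g1 g2 => CArr (co_shift_ty c g1) (co_shift_ty c g2)
  | CHand g1 g2 => CHand (co_shift_ty c g1) (co_shift_ty c g2)
  | CHandToFun g1 g2 => CHandToFun (co_shift_ty c g1) (co_shift_ty c g2)
  | CFunToHand g1 g2 => CFunToHand (co_shift_ty c g1) (co_shift_ty c g2)
  | CAll g => CAll (co_shift_ty c.+1 g)
  | CQual A B g => CQual (ty_shift c A) (ty_shift c B) (co_shift_ty c g)
  | CComp g => CComp (co_shift_ty c g)
  | CRet g => CRet (co_shift_ty c g)
  | CUnsafe g => CUnsafe (co_shift_ty c g)
  end.

Fixpoint co_shift_co (c : nat) (g : co) : co :=
  match g with
  | CVar w => CVar (if w < c then w else w.+1)
  | CUnit => CUnit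
  | CTVar n => CTVar n
  | CArr g1 g2 => CArr (co_shift_co c g1) (co_shift_co c g2)
  | CHand g1 g2 => CHand (co_shift_co c g1) (co_shift_co c g2)
  | CHandToFun g1 g2 => CHandToFun (co_shift_co c g1) (co_shift_co c g2)
  | CFunToHand g1 g2 => CFunToHand (co_shift_co c g1) (co_shift_co c g2)
  | CAll g => CAll (co_shift_co c g)
  | CQual A B g => CQual A B (co_shift_co c g)
  | CComp g => CComp (co_shift_co c g)
  | CRet g => CRet (co_shift_co c g)
  | CUnsafe g => CUnsafe (co_shift_co c g)
  end.

(* Reflexivity coercion <A> for an arbitrary type A; this is what <alpha>
   becomes under a type substitution [A/alpha]. *)
Fixpoint refl_co (A : ty) : co :=
  match A with
  | TVar n => CTVar n
  | TUnit => CUnit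
  | TArr A B => CArr (refl_co A) (refl_co B)
  | THand A B => CHand (CComp (refl_co A)) (CComp (refl_co B))
  | TQual A B C => CQual A B (refl_co C)
  | TComp A => CComp (refl_co A)
  | TAll A => CAll (refl_co A)
  end.

Fixpoint co_subst_ty (k : nat) (S : ty) (g : co) : co :=
  match g with
  | CVar w => CVar w
  | CUnit => CUnit
  | CTVar n => if n < k then CTVar n else if n == k then refl_co S else CTVar n.-1
  | CArr g1 g2 => CArr (co_subst_ty k S g1) (co_subst_ty k S g2)
  | CHand g1 g2 => CHand (co_subst_ty k S g1) (co_subst_ty k S g2)
  | CHandToFun g1 g2 => CHandToFun (co_subst_ty k S g1) (co_subst_ty k S g2)
  | CFunToHand g1 g2 => CFunToHand (co_subst_ty k S g1) (co_subst_ty k S g2)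
  | CAll g => CAll (co_subst_ty k.+1 (ty_shift 0 S) g)
  | CQual A B g => CQual (ty_subst k S A) (ty_subst k S B) (co_subst_ty k S g)
  | CComp g => CComp (co_subst_ty k S g)
  | CRet g => CRet (co_subst_ty k S g)
  | CUnsafe g => CUnsafe (co_subst_ty k S g)
  end.

Fixpoint co_subst_co (k : nat) (h : co) (g : co) : co :=
  match g with
  | CVar w => if w < k then CVar w else if w == k then h else CVar w.-1
  | CUnit => CUnit
  | CTVar n => CTVar n
  | CArr g1 g2 => CArr (co_subst_co k h g1) (co_subst_co k h g2)
  | CHand g1 g2 => CHand (co_subst_co k h g1) (co_subst_co k h g2)
  | CHandToFun g1 g2 => CHandToFun (co_subst_co k h g1) (co_subst_co k h g2)
  | CFunToHand g1 g2 => CFunToHand (co_subst_co k h g1) (co_subst_co k h g2)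
  | CAll g => CAll (co_subst_co k (co_shift_ty 0 h) g)
  | CQual A B g => CQual A B (co_subst_co k h g)
  | CComp g => CComp (co_subst_co k h g)
  | CRet g => CRet (co_subst_co k h g)
  | CUnsafe g => CUnsafe (co_subst_co k h g)
  end.

Inductive tm (O : Type) : Type :=
| Var    : nat -> tm O
| UnitT  : tm O
| Lam    : ty -> tm O -> tm O
| App    : tm O -> tm O -> tm O
| TLam   : tm O -> tm O
| TApp   : tm O -> ty -> tm O
| CLam   : ty -> ty -> tm O -> tm O
| CApp   : tm O -> co -> tm O
| Cast   : tm O -> co -> tm O
| Ret    : tm O -> tm O
| Hand   : ty -> tm O -> clauses O -> tm O    (* {return (x:A) |-> t_r, clauses} *)
| Let    : tm O -> tm O -> tm O
| OpCall : O -> tm O -> ty -> tm O -> tm O    (* Op t1 (y:B. t2)     binds y in t2 *)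
| Do     : tm O -> tm O -> tm O
| With   : tm O -> tm O -> tm O               (* with t_h handle t_c *)
(* operation clauses  Op x k |-> t_Op : in t_Op, k is Var 0 and x is Var 1 *)
with clauses (O : Type) : Type :=
| CNil  : clauses O
| CCons : O -> tm O -> clauses O -> clauses O.

Arguments Var {O}. Arguments UnitT {O}. Arguments Lam {O}. Arguments App {O}.
Arguments TLam {O}. Arguments TApp {O}. Arguments CLam {O}. Arguments CApp {O}.
Arguments Cast {O}. Arguments Ret {O}. Arguments Hand {O}. Arguments Let {O}.
Arguments OpCall {O}. Arguments Do {O}. Arguments With {O}.
Arguments CNil {O}. Arguments CCons {O}.

Section TermOps.
Variable O : Type.

Fixpoint tm_shift_tm (c : nat) (t : tm O) : tm O :=
  match t with
  | Var n => Var (if n < c then n else n.+1)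
  | UnitT => UnitT
  | Lam A t => Lam A (tm_shift_tm c.+1 t)
  | App t1 t2 => App (tm_shift_tm c t1) (tm_shift_tm c t2)
  | TLam t => TLam (tm_shift_tm c t)
  | TApp t A => TApp (tm_shift_tm c t) A
  | CLam A B t => CLam A B (tm_shift_tm c t)
  | CApp t g => CApp (tm_shift_tm c t) g
  | Cast t g => Cast (tm_shift_tm c t) g
  | Ret t => Ret (tm_shift_tm c t)
  | Hand A tr cls => Hand A (tm_shift_tm c.+1 tr) (cl_shift_tm c cls)
  | Let t1 t2 => Let (tm_shift_tm c t1) (tm_shift_tm c.+1 t2)
  | OpCall o t1 B t2 => OpCall o (tm_shift_tm c t1) B (tm_shift_tm c.+1 t2)
  | Do t1 t2 => Do (tm_shift_tm c t1) (tm_shift_tm c.+1 t2)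
  | With t1 t2 => With (tm_shift_tm c t1) (tm_shift_tm c t2)
  end
with cl_shift_tm (c : nat) (cls : clauses O) : clauses O :=
  match cls with
  | CNil => CNil
  | CCons o t r => CCons o (tm_shift_tm c.+2 t) (cl_shift_tm c r)
  end.

Fixpoint tm_shift_ty (c : nat) (t : tm O) : tm O :=
  match t with
  | Var n => Var n
  | UnitT => UnitT
  | Lam A t => Lam (ty_shift c A) (tm_shift_ty c t)
  | App t1 t2 => App (tm_shift_ty c t1) (tm_shift_ty c t2)
  | TLam t => TLam (tm_shift_ty c.+1 t)
  | TApp t A => TApp (tm_shift_ty c t) (ty_shift c A)
  | CLam A B t => CLam (ty_shift c A) (ty_shift c B) (tm_shift_ty c t)
  | CApp t g => CApp (tm_shift_ty c t) (co_shift_ty c g)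
  | Cast t g => Cast (tm_shift_ty c t) (co_shift_ty c g)
  | Ret t => Ret (tm_shift_ty c t)
  | Hand A tr cls => Hand (ty_shift c A) (tm_shift_ty c tr) (cl_shift_ty c cls)
  | Let t1 t2 => Let (tm_shift_ty c t1) (tm_shift_ty c t2)
  | OpCall o t1 B t2 => OpCall o (tm_shift_ty c t1) (ty_shift c B) (tm_shift_ty c t2)
  | Do t1 t2 => Do (tm_shift_ty c t1) (tm_shift_ty c t2)
  | With t1 t2 => With (tm_shift_ty c t1) (tm_shift_ty c t2)
  end
with cl_shift_ty (c : nat) (cls : clauses O) : clauses O :=
  match cls with
  | CNil => CNil
  | CCons o t r => CCons o (tm_shift_ty c t) (cl_shift_ty c r)
  end.

Fixpoint tm_shift_co (c : nat) (t : tm O) : tm O :=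
  match t with
  | Var n => Var n
  | UnitT => UnitT
  | Lam A t => Lam A (tm_shift_co c t)
  | App t1 t2 => App (tm_shift_co c t1) (tm_shift_co c t2)
  | TLam t => TLam (tm_shift_co c t)
  | TApp t A => TApp (tm_shift_co c t) A
  | CLam A B t => CLam A B (tm_shift_co c.+1 t)
  | CApp t g => CApp (tm_shift_co c t) (co_shift_co c g)
  | Cast t g => Cast (tm_shift_co c t) (co_shift_co c g)
  | Ret t => Ret (tm_shift_co c t)
  | Hand A tr cls => Hand A (tm_shift_co c tr) (cl_shift_co c cls)
  | Let t1 t2 => Let (tm_shift_co c t1) (tm_shift_co c t2)
  | OpCall o t1 B t2 => OpCall o (tm_shift_co c t1) B (tm_shift_co c t2)
  | Do t1 t2 => Do (tm_shift_co c t1) (tm_shift_co c t2)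
  | With t1 t2 => With (tm_shift_co c t1) (tm_shift_co c t2)
  end
with cl_shift_co (c : nat) (cls : clauses O) : clauses O :=
  match cls with
  | CNil => CNil
  | CCons o t r => CCons o (tm_shift_co c t) (cl_shift_co c r)
  end.

Fixpoint tm_subst_tm (k : nat) (s : tm O) (t : tm O) : tm O :=
  match t with
  | Var n => if n < k then Var n else if n == k then s else Var n.-1
  | UnitT => UnitT
  | Lam A t => Lam A (tm_subst_tm k.+1 (tm_shift_tm 0 s) t)
  | App t1 t2 => App (tm_subst_tm k s t1) (tm_subst_tm k s t2)
  | TLam t => TLam (tm_subst_tm k (tm_shift_ty 0 s) t)
  | TApp t A => TApp (tm_subst_tm k s t) A
  | CLam A B t => CLam A B (tm_subst_tm k (tm_shift_co 0 s) t)
  | CApp t g => CApp (tm_subst_tm k s t) g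
  | Cast t g => Cast (tm_subst_tm k s t) g
  | Ret t => Ret (tm_subst_tm k s t)
  | Hand A tr cls => Hand A (tm_subst_tm k.+1 (tm_shift_tm 0 s) tr) (cl_subst_tm k s cls)
  | Let t1 t2 => Let (tm_subst_tm k s t1) (tm_subst_tm k.+1 (tm_shift_tm 0 s) t2)
  | OpCall o t1 B t2 =>
      OpCall o (tm_subst_tm k s t1) B (tm_subst_tm k.+1 (tm_shift_tm 0 s) t2)
  | Do t1 t2 => Do (tm_subst_tm k s t1) (tm_subst_tm k.+1 (tm_shift_tm 0 s) t2)
  | With t1 t2 => With (tm_subst_tm k s t1) (tm_subst_tm k s t2)
  end
with cl_subst_tm (k : nat) (s : tm O) (cls : clauses O) : clauses O :=
  match cls with
  | CNil => CNil
  | CCons o t r =>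
      CCons o (tm_subst_tm k.+2 (tm_shift_tm 0 (tm_shift_tm 0 s)) t) (cl_subst_tm k s r)
  end.

Fixpoint tm_subst_ty (k : nat) (S : ty) (t : tm O) : tm O :=
  match t with
  | Var n => Var n
  | UnitT => UnitT
  | Lam A t => Lam (ty_subst k S A) (tm_subst_ty k S t)
  | App t1 t2 => App (tm_subst_ty k S t1) (tm_subst_ty k S t2)
  | TLam t => TLam (tm_subst_ty k.+1 (ty_shift 0 S) t)
  | TApp t A => TApp (tm_subst_ty k S t) (ty_subst k S A)
  | CLam A B t => CLam (ty_subst k S A) (ty_subst k S B) (tm_subst_ty k S t)
  | CApp t g => CApp (tm_subst_ty k S t) (co_subst_ty k S g)
  | Cast t g => Cast (tm_subst_ty k S t) (co_subst_ty k S g)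
  | Ret t => Ret (tm_subst_ty k S t)
  | Hand A tr cls => Hand (ty_subst k S A) (tm_subst_ty k S tr) (cl_subst_ty k S cls)
  | Let t1 t2 => Let (tm_subst_ty k S t1) (tm_subst_ty k S t2)
  | OpCall o t1 B t2 => OpCall o (tm_subst_ty k S t1) (ty_subst k S B) (tm_subst_ty k S t2)
  | Do t1 t2 => Do (tm_subst_ty k S t1) (tm_subst_ty k S t2)
  | With t1 t2 => With (tm_subst_ty k S t1) (tm_subst_ty k S t2)
  end
with cl_subst_ty (k : nat) (S : ty) (cls : clauses O) : clauses O :=
  match cls with
  | CNil => CNil
  | CCons o t r => CCons o (tm_subst_ty k S t) (cl_subst_ty k S r)
  end.

Fixpoint tm_subst_co (k : nat) (h : co) (t : tm O) : tm O :=
  match t with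
  | Var n => Var n
  | UnitT => UnitT
  | Lam A t => Lam A (tm_subst_co k h t)
  | App t1 t2 => App (tm_subst_co k h t1) (tm_subst_co k h t2)
  | TLam t => TLam (tm_subst_co k (co_shift_ty 0 h) t)
  | TApp t A => TApp (tm_subst_co k h t) A
  | CLam A B t => CLam A B (tm_subst_co k.+1 (co_shift_co 0 h) t)
  | CApp t g => CApp (tm_subst_co k h t) (co_subst_co k h g)
  | Cast t g => Cast (tm_subst_co k h t) (co_subst_co k h g)
  | Ret t => Ret (tm_subst_co k h t)
  | Hand A tr cls => Hand A (tm_subst_co k h tr) (cl_subst_co k h cls)
  | Let t1 t2 => Let (tm_subst_co k h t1) (tm_subst_co k h t2)
  | OpCall o t1 B t2 => OpCall o (tm_subst_co k h t1) B (tm_subst_co k h t2)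
  | Do t1 t2 => Do (tm_subst_co k h t1) (tm_subst_co k h t2)
  | With t1 t2 => With (tm_subst_co k h t1) (tm_subst_co k h t2)
  end
with cl_subst_co (k : nat) (h : co) (cls : clauses O) : clauses O :=
  match cls with
  | CNil => CNil
  | CCons o t r => CCons o (tm_subst_co k h t) (cl_subst_co k h r)
  end.

Fixpoint cl_ops (cls : clauses O) : seq O :=
  match cls with CNil => [::] | CCons o _ r => o :: cl_ops r end.

Fixpoint cl_in (o : O) (t : tm O) (cls : clauses O) : Prop :=
  match cls with
  | CNil => False
  | CCons o' t' r => (o = o' /\ t = t') \/ cl_in o t r
  end.

End TermOps.

Fixpoint cl_find (O : eqType) (o : O) (cls : clauses O) : option (tm O) :=
  match cls with
  | CNil => None
  | CCons o' t r => if o == o' then Some t else cl_find o r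
  end.

(* A context Gamma is represented (de Bruijn style) by the
   number of type variables in scope, the list of coercion-variable
   declarations (most recent first) and the list of term-variable
   declarations (most recent first).  Extending with a type variable shifts
   the types of all earlier declarations. *)
Record ctx := Ctx { ctx_nty : nat; ctx_co : seq cty; ctx_tm : seq ty }.

Definition ext_ty (G : ctx) : ctx :=
  Ctx (ctx_nty G).+1
      [seq (ty_shift 0 mu.1, ty_shift 0 mu.2) | mu <- ctx_co G]
      [seq ty_shift 0 A | A <- ctx_tm G].
Definition ext_co (G : ctx) (mu : cty) : ctx := Ctx (ctx_nty G) (mu :: ctx_co G) (ctx_tm G).
Definition ext_tm (G : ctx) (A : ty) : ctx := Ctx (ctx_nty G) (ctx_co G) (A :: ctx_tm G).

Fixpoint lookup (T : Type) (l : seq T) (i : nat) : option T :=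
  match l, i with
  | [::], _ => None
  | x :: _, 0 => Some x
  | _ :: l, i.+1 => lookup l i
  end.

Definition wf_ty_ctx (G : ctx) (A : ty) : Prop := wf_ty (ctx_nty G) A.
Definition wf_cty_ctx (G : ctx) (mu : cty) : Prop := wf_cty (ctx_nty G) mu.

Inductive co_typing : ctx -> co -> cty -> Prop :=
| CT_Var G w mu : lookup (ctx_co G) w = Some mu -> co_typing G (CVar w) mu
| CT_Unit G : co_typing G CUnit (TUnit, TUnit)
| CT_TVar G a : a < ctx_nty G -> co_typing G (CTVar a) (TVar a, TVar a)
| CT_Arr G g1 g2 A1 A2 B1 B2 :
    co_typing G g1 (A2, A1) -> co_typing G g2 (B1, B2) ->
    co_typing G (CArr g1 g2) (TArr A1 B1, TArr A2 B2)
| CT_Hand G g1 g2 A1 A2 B1 B2 :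
    co_typing G g1 (TComp A2, TComp A1) -> co_typing G g2 (TComp B1, TComp B2) ->
    co_typing G (CHand g1 g2) (THand A1 B1, THand A2 B2)
| CT_HandToFun G g1 g2 A1 A2 B1 B2 :
    co_typing G g1 (A2, A1) -> co_typing G g2 (TComp B1, B2) ->
    co_typing G (CHandToFun g1 g2) (THand A1 B1, TArr A2 B2)
| CT_FunToHand G g1 g2 A1 A2 B1 B2 :
    co_typing G g1 (A2, A1) -> co_typing G g2 (B1, TComp B2) ->
    co_typing G (CFunToHand g1 g2) (TArr A1 B1, THand A2 B2)
| CT_All G g A B :
    co_typing (ext_ty G) g (A, B) -> co_typing G (CAll g) (TAll A, TAll B)
| CT_Qual G mA mB g A B :
    wf_cty_ctx G (mA, mB) -> co_typing G g (A, B) ->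
    co_typing G (CQual mA mB g) (TQual mA mB A, TQual mA mB B)
| CT_Comp G g A1 A2 :
    co_typing G g (A1, A2) -> co_typing G (CComp g) (TComp A1, TComp A2)
| CT_Ret G g A1 A2 :
    co_typing G g (A1, A2) -> co_typing G (CRet g) (A1, TComp A2)
| CT_Unsafe G g A1 A2 :
    co_typing G g (A1, A2) -> co_typing G (CUnsafe g) (TComp A1, A2).

(* Term typing  Gamma |- t : A, relative to a signature sig : O -> A1 * A2
   ((Op : A1 -> A2) in Sigma). *)
Inductive typing (O : eqType) (sig : O -> ty * ty) : ctx -> tm O -> ty -> Prop :=
| T_Var G x A : lookup (ctx_tm G) x = Some A -> typing sig G (Var x) A
| T_Unit G : typing sig G UnitT TUnit
| T_Lam G A B t :
    wf_ty_ctx G A -> typing sig (ext_tm G A) t B -> typing sig G (Lam A t) (TArr A B)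
| T_TLam G t A :
    typing sig (ext_ty G) t A -> typing sig G (TLam t) (TAll A)
| T_TApp G t A B :
    wf_ty_ctx G A -> typing sig G t (TAll B) -> typing sig G (TApp t A) (ty_subst 0 A B)
| T_Cast G t g A B :
    typing sig G t A -> co_typing G g (A, B) -> typing sig G (Cast t g) B
| T_Hand G A B tr cls :
    typing sig (ext_tm G A) tr (TComp B) ->
    uniq (cl_ops cls) ->
    (forall o tO, cl_in o tO cls ->
       typing sig (ext_tm (ext_tm G (sig o).1) (TArr (sig o).2 (TComp B))) tO (TComp B)) ->
    typing sig G (Hand A tr cls) (THand A B)
| T_CLam G mA mB t A :
    wf_cty_ctx G (mA, mB) -> typing sig (ext_co G (mA, mB)) t A ->
    typing sig G (CLam mA mB t) (TQual mA mB A)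
| T_CApp G t g mA mB A :
    typing sig G t (TQual mA mB A) -> co_typing G g (mA, mB) -> typing sig G (CApp t g) A
| T_App G t1 t2 A B :
    typing sig G t1 (TArr A B) -> typing sig G t2 A -> typing sig G (App t1 t2) B
| T_Let G t1 t2 A B :
    typing sig G t1 A -> typing sig (ext_tm G A) t2 B -> typing sig G (Let t1 t2) B
| T_Ret G t A : typing sig G t A -> typing sig G (Ret t) (TComp A)
| T_Op G o t1 t2 B :
    typing sig G t1 (sig o).1 -> typing sig (ext_tm G (sig o).2) t2 (TComp B) ->
    typing sig G (OpCall o t1 (sig o).2 t2) (TComp B)
| T_Do G t1 t2 A B :
    typing sig G t1 (TComp A) -> typing sig (ext_tm G A) t2 (TComp B) ->
    typing sig G (Do t1 t2) (TComp B)
| T_With G th tc A B :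
    typing sig G th (THand A B) -> typing sig G tc (TComp A) ->
    typing sig G (With th tc) (TComp B).

Inductive value (O : Type) : tm O -> Prop :=
| V_Unit : value UnitT
| V_Hand A tr cls : value (Hand A tr cls)
| V_Lam A t : value (Lam A t)
| V_TLam t : value (TLam t)
| V_CLam A B t : value (CLam A B t)
| V_CastArr v g1 g2 : value v -> value (Cast v (CArr g1 g2))
| V_CastHand v g1 g2 : value v -> value (Cast v (CHand g1 g2))
| V_CastHandToFun v g1 g2 : value v -> value (Cast v (CHandToFun g1 g2))
| V_CastFunToHand v g1 g2 : value v -> value (Cast v (CFunToHand g1 g2))
| V_CastAll v g : value v -> value (Cast v (CAll g))
| V_CastQual v A B g : value v -> value (Cast v (CQual A B g))
| V_Ret v : value v -> value (Ret v)
| V_Op o v B t : value v -> value (OpCall o v B t).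

Inductive step (O : eqType) : tm O -> tm O -> Prop :=
| S_App1 t1 t1' t2 : step t1 t1' -> step (App t1 t2) (App t1' t2)
| S_App2 v t2 t2' : value v -> step t2 t2' -> step (App v t2) (App v t2')
| S_TApp t t' A : step t t' -> step (TApp t A) (TApp t' A)
| S_CApp t t' g : step t t' -> step (CApp t g) (CApp t' g)
| S_Let t1 t1' t2 : step t1 t1' -> step (Let t1 t2) (Let t1' t2)
| S_Ret t t' : step t t' -> step (Ret t) (Ret t')
| S_Op o t1 t1' B t2 : step t1 t1' -> step (OpCall o t1 B t2) (OpCall o t1' B t2)
| S_Do t1 t1' t2 : step t1 t1' -> step (Do t1 t2) (Do t1' t2)
| S_With1 th th' tc : step th th' -> step (With th tc) (With th' tc)
| S_With2 vh tc tc' : value vh -> step tc tc' -> step (With vh tc) (With vh tc')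
| S_Cast t t' g : step t t' -> step (Cast t g) (Cast t' g)
| S_Beta A t v : value v -> step (App (Lam A t) v) (tm_subst_tm 0 v t)
| S_TBeta t A : step (TApp (TLam t) A) (tm_subst_ty 0 A t)
| S_CBeta mA mB t g : step (CApp (CLam mA mB t) g) (tm_subst_co 0 g t)
| S_LetV v t : value v -> step (Let v t) (tm_subst_tm 0 v t)
| S_DoRet v t : value v -> step (Do (Ret v) t) (tm_subst_tm 0 v t)
| S_DoOp o v B t1 t2 : value v ->
    step (Do (OpCall o v B t1) t2) (OpCall o v B (Do t1 (tm_shift_tm 1 t2)))
| S_HandRet A tr cls v : value v ->
    step (With (Hand A tr cls) (Ret v)) (tm_subst_tm 0 v tr)
| S_HandOp A tr cls o v B t tO : value v -> cl_find o cls = Some tO ->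
    step (With (Hand A tr cls) (OpCall o v B t))
         (tm_subst_tm 0 v
            (tm_subst_tm 0
               (tm_shift_tm 0 (Lam B (With (tm_shift_tm 0 (Hand A tr cls)) t))) tO))
| S_HandFwd A tr cls o v B t : value v -> cl_find o cls = None ->
    step (With (Hand A tr cls) (OpCall o v B t))
         (OpCall o v B (With (tm_shift_tm 0 (Hand A tr cls)) t))
| S_CastUnit v : value v -> step (Cast v CUnit) v
| S_CastCompRet v g : value v -> step (Cast (Ret v) (CComp g)) (Ret (Cast v g))
| S_CastCompOp o v B t g : value v ->
    step (Cast (OpCall o v B t) (CComp g)) (OpCall o v B (Cast t (CComp g)))
| S_CastRet v g : value v -> step (Cast v (CRet g)) (Ret (Cast v g))
| S_CastUnsafe v g : value v -> step (Cast (Ret v) (CUnsafe g)) (Cast v g)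
| S_AppCast v g1 g2 t : value v ->
    step (App (Cast v (CArr g1 g2)) t) (Cast (App v (Cast t g1)) g2)
| S_WithCastHand v2 g1 g2 v1 : value v2 -> value v1 ->
    step (With (Cast v2 (CHand g1 g2)) v1) (Cast (With v2 (Cast v1 g1)) g2)
| S_AppHandToFun v1 g1 g2 v2 : value v1 -> value v2 ->
    step (App (Cast v1 (CHandToFun g1 g2)) v2) (Cast (With v1 (Ret (Cast v2 g1))) g2)
| S_WithFunToHandOp v2 g1 g2 o v1 B t : value v2 -> value v1 ->
    step (With (Cast v2 (CFunToHand g1 g2)) (OpCall o v1 B t))
         (OpCall o v1 B (With (tm_shift_tm 0 (Cast v2 (CFunToHand g1 g2))) t))
| S_WithFunToHandRet v2 g1 g2 v1 : value v2 -> value v1 ->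
    step (With (Cast v2 (CFunToHand g1 g2)) (Ret v1)) (Cast (App v2 (Cast v1 g1)) g2)
| S_TAppCast v g A : value v ->
    step (TApp (Cast v (CAll g)) A) (Cast (TApp v A) (co_subst_ty 0 A g))
| S_CAppCast v mA mB g1 g2 : value v ->
    step (CApp (Cast v (CQual mA mB g1)) g2) (Cast (CApp v g2) g1).

From mathcomp Require Import all_boot zify.
Set Implicit Arguments. Unset Strict Implicit. Unset Printing Implicit Defensive.

(* Subject reduction goes by induction on the step, after inverting the typing
   derivation of the redex.  Congruences and the coercion-pushing rules only
   rearrange typing derivations; the beta-like rules need a substitution lemma
   for each kind of variable (term, type, coercion).  With de Bruijn indices these
   are proved for a variable inserted at an arbitrary position, on top of the
   matching weakening lemmas; the type-variable case rests on the commutation of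
   shifting and substitution on types and on [refl_co], which is what <alpha>
   becomes under [A/alpha].  Operation signatures are closed, so shifting and
   substitution leave them unchanged. *)

Ltac case_var_ifs :=
  repeat (simpl; match goal with
  | |- context [if ?b then _ else _] =>
      lazymatch b with
      | context [if _ then _ else _] => fail
      | _ => let E := fresh "E" in case E: b
      end
  end); simpl;
  try solve [reflexivity | lia | congr TVar; lia].

Lemma wf_ty_le n m A : n <= m -> wf_ty n A -> wf_ty m A.
Proof.
elim: A n m => /= [a| |A IA B IB|A IA B IB|A IA B IB C IC|A IA|A IA] n m le_nm;
  [lia | | | | | | exact: IA].
all: intuition eauto.
Qed.

Lemma wf_ty_shift n c A : wf_ty n A -> wf_ty n.+1 (ty_shift c A).
Proof.
elim: A n c => /= [a| |A IA B IB|A IA B IB|A IA B IB C IC|A IA|A IA] n c; first by case_var_ifs.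
all: intuition eauto.
Qed.

Lemma ty_shift_wf_id n c A : n <= c -> wf_ty n A -> ty_shift c A = A.
Proof.
elim: A n c => /= [a| |A IA B IB|A IA B IB|A IA B IB C IC|A IA|A IA] n c le_nc;
  [by case_var_ifs | | | | | | by move=> wfA; rewrite (IA n.+1)].
all: intuition (f_equal; eauto).
Qed.

Lemma ty_subst_wf_id n k S A : n <= k -> wf_ty n A -> ty_subst k S A = A.
Proof.
elim: A n k S => /= [a| |A IA B IB|A IA B IB|A IA B IB C IC|A IA|A IA] n k S le_nk;
  [by case_var_ifs | | | | | | by move=> wfA; rewrite (IA n.+1)].
all: intuition (f_equal; eauto).
Qed.

Lemma wf_ty_subst n k S A : k <= n -> wf_ty n S -> wf_ty n.+1 A -> wf_ty n (ty_subst k S A).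
Proof.
elim: A n k S => /= [a| |A IA B IB|A IA B IB|A IA B IB C IC|A IA|A IA] n k S le_kn wfS wfA;
  [by case_var_ifs | | | | | | by apply: IA; [|apply: wf_ty_shift|]].
all: intuition auto.
Qed.

Lemma ty_shiftK k S : cancel (ty_shift k) (ty_subst k S).
Proof.
move=> A; elim: A k S => /= [a| |A IA B IB|A IA B IB|A IA B IB C IC|A IA|A IA] k S;
  by [case_var_ifs | f_equal; auto].
Qed.

Lemma ty_shift_shift c d A : c <= d -> ty_shift d.+1 (ty_shift c A) = ty_shift c (ty_shift d A).
Proof.
elim: A c d => /= [a| |A IA B IB|A IA B IB|A IA B IB C IC|A IA|A IA] c d le_cd;
  by [case_var_ifs | f_equal; auto].
Qed.

Lemma ty_shift_subst_ge c k S A : k <= c ->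
  ty_shift c (ty_subst k S A) = ty_subst k (ty_shift c S) (ty_shift c.+1 A).
Proof.
elim: A c k S => /= [a| |A IA B IB|A IA B IB|A IA B IB C IC|A IA|A IA] c k S le_kc;
  by [case_var_ifs | f_equal; auto | rewrite IA // ty_shift_shift].
Qed.

Lemma ty_shift_subst_le c k S A : c <= k ->
  ty_shift c (ty_subst k S A) = ty_subst k.+1 (ty_shift c S) (ty_shift c A).
Proof.
elim: A c k S => /= [a| |A IA B IB|A IA B IB|A IA B IB C IC|A IA|A IA] c k S le_ck;
  by [case_var_ifs | f_equal; auto | rewrite IA // ty_shift_shift].
Qed.

Lemma ty_subst_subst j k S T A : j <= k ->
  ty_subst k S (ty_subst j T A) = ty_subst j (ty_subst k S T) (ty_subst k.+1 (ty_shift j S) A).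
Proof.
elim: A j k S T => /= [a| |A IA B IB|A IA B IB|A IA B IB C IC|A IA|A IA] j k S T le_jk;
  last by rewrite IA // ty_shift_subst_le // ty_shift_shift.
- by case_var_ifs; rewrite ty_shiftK.
all: by f_equal; auto.
Qed.

Definition cty_shift c (mu : cty) : cty := (ty_shift c mu.1, ty_shift c mu.2).
Definition cty_subst k S (mu : cty) : cty := (ty_subst k S mu.1, ty_subst k S mu.2).

Lemma cty_shiftK k S : cancel (cty_shift k) (cty_subst k S).
Proof. by case=> A B; rewrite /cty_subst /= !ty_shiftK. Qed.

Lemma lookup_map T U (f : T -> U) l n : lookup (map f l) n = omap f (lookup l n).
Proof. by elim: l n => [|x l IHl] [|n] //=. Qed.

(* Phrased through [lookup] rather than [take]/[drop], so no bound on [k] is needed. *)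
Definition inserted_at T k (x : T) (l' l : seq T) :=
  forall n, lookup l' n = if n < k then lookup l n else if n == k then Some x else lookup l n.-1.

Lemma inserted_at0 T (x : T) l : inserted_at 0 x (x :: l) l.
Proof. by case. Qed.

Lemma inserted_at_cons T k (x y : T) l' l :
  inserted_at k x l' l -> inserted_at k.+1 x (y :: l') (y :: l).
Proof.
move=> ins [|n] //=; rewrite ins ltnS eqSS.
by case: n => [|n] //=; case: ltngtP.
Qed.

Lemma inserted_at_map T U (f : T -> U) k x l' l :
  inserted_at k x l' l -> inserted_at k (f x) (map f l') (map f l).
Proof. by move=> ins n; rewrite !lookup_map ins; case: ifP => // _; case: ifP. Qed.

Lemma lookup_inserted_at T k (x : T) l' l n :
  inserted_at k x l' l -> lookup l' (if n < k then n else n.+1) = lookup l n.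
Proof.
move=> ins; case: (ltnP n k) => [lt_nk|le_kn]; rewrite ins ?lt_nk //.
by rewrite ltnNge (leqW le_kn) gtn_eqF.
Qed.

Definition ctx_shift_ty c (G : ctx) : ctx :=
  Ctx (ctx_nty G).+1 (map (cty_shift c) (ctx_co G)) (map (ty_shift c) (ctx_tm G)).

Definition ctx_subst_ty k S (G : ctx) : ctx :=
  Ctx (ctx_nty G).-1 (map (cty_subst k S) (ctx_co G)) (map (ty_subst k S) (ctx_tm G)).

Lemma ext_ty_shift c G : ext_ty (ctx_shift_ty c G) = ctx_shift_ty c.+1 (ext_ty G).
Proof.
rewrite /ext_ty /ctx_shift_ty /=; congr Ctx; rewrite -!map_comp; apply: eq_map.
  by case=> A B; rewrite /cty_shift /= !ty_shift_shift.
by move=> A /=; rewrite ty_shift_shift.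
Qed.

Lemma ctx_shift_ty_ext_tm c G A :
  ctx_shift_ty c (ext_tm G A) = ext_tm (ctx_shift_ty c G) (ty_shift c A).
Proof. by []. Qed.

Lemma ctx_subst_ty_ext_tm k S G A :
  ctx_subst_ty k S (ext_tm G A) = ext_tm (ctx_subst_ty k S G) (ty_subst k S A).
Proof. by []. Qed.

Lemma ext_ty_subst k S G : 0 < ctx_nty G ->
  ext_ty (ctx_subst_ty k S G) = ctx_subst_ty k.+1 (ty_shift 0 S) (ext_ty G).
Proof.
move=> nty_gt0; rewrite /ext_ty /ctx_subst_ty /= prednK //; congr Ctx; rewrite -!map_comp;
  apply: eq_map.
  by case=> A B; rewrite /cty_shift /cty_subst /= !ty_shift_subst_le.
by move=> A /=; rewrite ty_shift_subst_le.
Qed.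

Lemma ext_tyK S G : ctx_subst_ty 0 S (ext_ty G) = G.
Proof.
case: G => n cs ts; rewrite /ctx_subst_ty /= -!map_comp.
by rewrite (eq_map (cty_shiftK 0 S)) (eq_map (ty_shiftK 0 S)) !map_id.
Qed.

Lemma wf_ty_ctx_subst n k S G A : ctx_nty G = n.+1 -> k <= n -> wf_ty n S ->
  wf_ty_ctx G A -> wf_ty_ctx (ctx_subst_ty k S G) (ty_subst k S A).
Proof. by rewrite /wf_ty_ctx /= => ->; exact: wf_ty_subst. Qed.

Lemma co_typing_tm_irrel G ts g mu :
  co_typing G g mu -> co_typing (Ctx (ctx_nty G) (ctx_co G) ts) g mu.
Proof.
by move=> g_typ; elim: g_typ ts => {G g mu}; intros; constructor; eauto.
Qed.

Lemma co_typing_ext_tm G X g mu : co_typing G g mu -> co_typing (ext_tm G X) g mu.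
Proof. exact: co_typing_tm_irrel. Qed.

Lemma co_typing_refl G A : wf_ty (ctx_nty G) A -> co_typing G (refl_co A) (A, A).
Proof.
elim: A G => /= [a| |A IA B IB|A IA B IB|A IA B IB C IC|A IA|A IA] G;
  intuition (repeat constructor; auto).
Qed.

Lemma co_typing_shift_ty c G g mu :
  co_typing G g mu -> co_typing (ctx_shift_ty c G) (co_shift_ty c g) (cty_shift c mu).
Proof.
move=> g_typ; elim: g_typ c => {G g mu}; try by intros; constructor; eauto.
- by move=> G w mu lookup_w c; constructor; rewrite lookup_map lookup_w.
- by move=> G a lt_a c; constructor; rewrite /=; case: ifP => _; lia.
- by move=> G g A B _ IH c; constructor; rewrite ext_ty_shift; exact: IH.
- move=> G mA mB g A B [wfA wfB] _ IH c; constructor; last exact: IH.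
  by split; apply: wf_ty_shift.
Qed.

Lemma co_typing_subst_ty n k S G g mu : ctx_nty G = n.+1 -> k <= n -> wf_ty n S ->
  co_typing G g mu -> co_typing (ctx_subst_ty k S G) (co_subst_ty k S g) (cty_subst k S mu).
Proof.
move=> nty_G le_kn wfS g_typ; elim: g_typ n k S nty_G le_kn wfS => {G g mu};
  try by intros; constructor; eauto.
- by move=> G w mu lookup_w *; constructor; rewrite lookup_map lookup_w.
- move=> G a lt_a n k S nty_G le_kn wfS; rewrite /cty_subst /=.
  case: ifP => lt_ak; first by constructor; rewrite /= nty_G; lia.
  case: ifP => [_|ne_ak]; first by apply: co_typing_refl; rewrite /= nty_G.
  by constructor; rewrite /= nty_G; lia.
- move=> G g A B _ IH n k S nty_G le_kn wfS; constructor.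
  by rewrite ext_ty_subst ?nty_G //; apply: IH; rewrite /= ?nty_G //; apply: wf_ty_shift.
- move=> G mA mB g A B [wfA wfB] _ IH n k S nty_G le_kn wfS; rewrite /cty_subst /=.
  constructor; last exact: (IH n).
  by split; apply: (wf_ty_ctx_subst nty_G).
Qed.

Lemma co_typing_shift_co c nu G cs g mu : co_typing G g mu -> inserted_at c nu cs (ctx_co G) ->
  co_typing (Ctx (ctx_nty G) cs (ctx_tm G)) (co_shift_co c g) mu.
Proof.
move=> g_typ ins; elim: g_typ c nu cs ins => {G g mu}; try by intros; constructor; eauto.
- by move=> G w mu lookup_w c nu cs ins; constructor; rewrite (lookup_inserted_at _ ins).
- move=> G g A B _ IH c nu cs ins; constructor.
  exact: (IH _ _ _ (inserted_at_map (cty_shift 0) ins)).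
Qed.

Lemma co_typing_subst_co k nu G cs h g mu : co_typing G g mu ->
  inserted_at k nu (ctx_co G) cs -> co_typing (Ctx (ctx_nty G) cs (ctx_tm G)) h nu ->
  co_typing (Ctx (ctx_nty G) cs (ctx_tm G)) (co_subst_co k h g) mu.
Proof.
move=> g_typ ins h_typ; elim: g_typ k nu cs h ins h_typ => {G g mu};
  try by intros; constructor; eauto.
- move=> G w mu lookup_w k nu cs h ins h_typ /=; rewrite ins in lookup_w.
  case: ifP lookup_w => _; first by constructor.
  by case: ifP => _ => [[<-]|]; last constructor.
- move=> G g A B _ IH k nu cs h ins h_typ; constructor.
  apply: (IH _ _ _ _ (inserted_at_map (cty_shift 0) ins)).
  exact: (co_typing_shift_ty 0 h_typ).
Qed.

Lemma co_typing_subst_ty0 S G g A B : wf_ty_ctx G S -> co_typing (ext_ty G) g (A, B) ->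
  co_typing G (co_subst_ty 0 S g) (ty_subst 0 S A, ty_subst 0 S B).
Proof. by move=> wfS g_typ; rewrite -(ext_tyK S G); exact: co_typing_subst_ty wfS g_typ. Qed.

Section Clauses.
Variable O : Type.

Fixpoint cl_map (f : tm O -> tm O) (cls : clauses O) : clauses O :=
  if cls is CCons o t cls' then CCons o (f t) (cl_map f cls') else CNil.

Lemma cl_ops_map f cls : cl_ops (cl_map f cls) = cl_ops cls.
Proof. by elim: cls => //= o t cls ->. Qed.

Lemma cl_in_map f cls o t :
  cl_in o t (cl_map f cls) -> exists2 t', t = f t' & cl_in o t' cls.
Proof.
by elim: cls => //= o' t' cls IH [[-> ->]|/IH [t0 -> ?]]; [exists t'; auto | exists t0; auto].
Qed.

Lemma cl_shift_tmE c cls : cl_shift_tm c cls = cl_map (tm_shift_tm c.+2) cls.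
Proof. by elim: cls => //= o t cls ->. Qed.
Lemma cl_shift_tyE c cls : cl_shift_ty c cls = cl_map (tm_shift_ty c) cls.
Proof. by elim: cls => //= o t cls ->. Qed.
Lemma cl_shift_coE c cls : cl_shift_co c cls = cl_map (tm_shift_co c) cls.
Proof. by elim: cls => //= o t cls ->. Qed.
Lemma cl_subst_tmE k s cls :
  cl_subst_tm k s cls = cl_map (tm_subst_tm k.+2 (tm_shift_tm 0 (tm_shift_tm 0 s))) cls.
Proof. by elim: cls => //= o t cls ->. Qed.
Lemma cl_subst_tyE k S cls : cl_subst_ty k S cls = cl_map (tm_subst_ty k S) cls.
Proof. by elim: cls => //= o t cls ->. Qed.
Lemma cl_subst_coE k h cls : cl_subst_co k h cls = cl_map (tm_subst_co k h) cls.
Proof. by elim: cls => //= o t cls ->. Qed.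

End Clauses.

Lemma cl_find_in (O : eqType) (o : O) cls t : cl_find o cls = Some t -> cl_in o t cls.
Proof. by elim: cls => //= o' t' cls IH; case: eqP => [-> [->]|_ /IH]; [left|right]. Qed.

Section Typing.
Variables (O : eqType) (sig : O -> ty * ty).
Hypothesis sig_closed : forall o, wf_ty 0 (sig o).1 /\ wf_ty 0 (sig o).2.

Lemma typing_shift_tm c X G ts t A : typing sig G t A -> inserted_at c X ts (ctx_tm G) ->
  typing sig (Ctx (ctx_nty G) (ctx_co G) ts) (tm_shift_tm c t) A.
Proof.
move=> t_typ ins; elim: t_typ c X ts ins => {G t A};
  try by intros => /=; econstructor; eauto using co_typing_tm_irrel.
- by move=> G x A lookup_x c X ts ins /=; constructor; rewrite (lookup_inserted_at _ ins).
- move=> G A B t wfA _ IH c X ts ins /=; constructor => //.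
  exact: (IH _ _ _ (inserted_at_cons _ ins)).
- by move=> G t A _ IH c X ts ins /=; constructor; exact: (IH _ _ _ (inserted_at_map _ ins)).
- move=> G A B tr cls _ IHr uniq_cls _ IHcl c X ts ins /=; rewrite cl_shift_tmE.
  constructor; [exact: (IHr _ _ _ (inserted_at_cons _ ins)) | by rewrite cl_ops_map |].
  move=> o _ /(@cl_in_map O) [tO -> cl_tO].
  exact: (IHcl _ _ cl_tO _ _ _ (inserted_at_cons _ (inserted_at_cons _ ins))).
- move=> G t1 t2 A B _ IH1 _ IH2 c X ts ins /=; econstructor; first exact: IH1 ins.
  exact: (IH2 _ _ _ (inserted_at_cons _ ins)).
- move=> G o t1 t2 B _ IH1 _ IH2 c X ts ins /=; econstructor; first exact: IH1 ins.
  exact: (IH2 _ _ _ (inserted_at_cons _ ins)).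
- move=> G t1 t2 A B _ IH1 _ IH2 c X ts ins /=; econstructor; first exact: IH1 ins.
  exact: (IH2 _ _ _ (inserted_at_cons _ ins)).
Qed.

Lemma typing_weaken X G t A : typing sig G t A -> typing sig (ext_tm G X) (tm_shift_tm 0 t) A.
Proof. by case: G => n cs ts t_typ; exact: (typing_shift_tm t_typ (inserted_at0 _ _)). Qed.

Lemma sig_shift c o : ty_shift c (sig o).1 = (sig o).1 /\ ty_shift c (sig o).2 = (sig o).2.
Proof. by have [wf1 wf2] := sig_closed o; split; apply: (ty_shift_wf_id (leq0n c)). Qed.

Lemma sig_subst k S o : ty_subst k S (sig o).1 = (sig o).1 /\ ty_subst k S (sig o).2 = (sig o).2.
Proof. by have [wf1 wf2] := sig_closed o; split; apply: (ty_subst_wf_id S (leq0n k)). Qed.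

Lemma typing_shift_ty c G t A :
  typing sig G t A -> typing sig (ctx_shift_ty c G) (tm_shift_ty c t) (ty_shift c A).
Proof.
move=> t_typ; elim: t_typ c => {G t A}; try by intros => /=; econstructor; eauto.
- by move=> G x A lookup_x c; constructor; rewrite lookup_map lookup_x.
- by move=> G A B t wfA _ IH c /=; constructor; [exact: wf_ty_shift | exact: IH].
- by move=> G t A _ IH c /=; constructor; rewrite ext_ty_shift; exact: IH.
- move=> G t A B wfA _ IH c /=; rewrite ty_shift_subst_ge //.
  by constructor; [exact: wf_ty_shift | exact: IH].
- move=> G t g A B _ IH g_typ c /=.
  by econstructor; [exact: IH | exact: (co_typing_shift_ty c g_typ)].
- move=> G A B tr cls _ IHr uniq_cls _ IHcl c /=; rewrite cl_shift_tyE.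
  constructor; [exact: IHr | by rewrite cl_ops_map |].
  move=> o _ /(@cl_in_map O) [tO -> cl_tO]; have [sh1 sh2] := sig_shift c o.
  by have := IHcl _ _ cl_tO c; rewrite !ctx_shift_ty_ext_tm /= sh1 sh2.
- move=> G mA mB t A [wfA wfB] _ IH c /=.
  by constructor; [split; exact: wf_ty_shift | exact: IH].
- move=> G t g mA mB A _ IH g_typ c /=.
  by econstructor; [exact: IH | exact: (co_typing_shift_ty c g_typ)].
- by move=> G t1 t2 A B _ IH1 _ IH2 c /=; econstructor; [exact: IH1 | exact: IH2].
- move=> G o t1 t2 B _ IH1 _ IH2 c /=; have [sh1 sh2] := sig_shift c o.
  rewrite sh2; constructor; first by rewrite -sh1; exact: IH1.
  by have := IH2 c; rewrite ctx_shift_ty_ext_tm sh2.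
- by move=> G t1 t2 A B _ IH1 _ IH2 c /=; econstructor; [exact: IH1 | exact: IH2].
Qed.

Lemma typing_shift_co c nu G cs t A : typing sig G t A -> inserted_at c nu cs (ctx_co G) ->
  typing sig (Ctx (ctx_nty G) cs (ctx_tm G)) (tm_shift_co c t) A.
Proof.
move=> t_typ ins; elim: t_typ c nu cs ins => {G t A}; try by intros => /=; econstructor; eauto.
- move=> G t A _ IH c nu cs ins /=; constructor.
  exact: (IH _ _ _ (inserted_at_map (cty_shift 0) ins)).
- by move=> G t g A B _ IH g_typ c nu cs ins /=; econstructor;
    [exact: IH ins | exact: co_typing_shift_co g_typ ins].
- move=> G A B tr cls _ IHr uniq_cls _ IHcl c nu cs ins /=; rewrite cl_shift_coE.
  constructor; [exact: IHr ins | by rewrite cl_ops_map |].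
  by move=> o _ /(@cl_in_map O) [tO -> cl_tO]; exact: IHcl cl_tO _ _ _ ins.
- move=> G mA mB t A wf_mu _ IH c nu cs ins /=; constructor => //.
  exact: (IH _ _ _ (inserted_at_cons _ ins)).
- by move=> G t g mA mB A _ IH g_typ c nu cs ins /=; econstructor;
    [exact: IH ins | exact: co_typing_shift_co g_typ ins].
Qed.

Lemma typing_subst_tm k U G ts s t A : typing sig G t A ->
  inserted_at k U (ctx_tm G) ts -> typing sig (Ctx (ctx_nty G) (ctx_co G) ts) s U ->
  typing sig (Ctx (ctx_nty G) (ctx_co G) ts) (tm_subst_tm k s t) A.
Proof.
move=> t_typ ins s_typ; elim: t_typ k U ts s ins s_typ => {G t A};
  try by intros => /=; econstructor; eauto using co_typing_tm_irrel.
- move=> G x A lookup_x k U ts s ins s_typ /=; rewrite ins in lookup_x.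
  case: ifP lookup_x => _; first by constructor.
  by case: ifP => _ => [[<-]|]; last constructor.
- move=> G A B t wfA _ IH k U ts s ins s_typ /=; constructor => //.
  exact: (IH _ _ _ _ (inserted_at_cons _ ins) (typing_weaken _ s_typ)).
- move=> G t A _ IH k U ts s ins s_typ /=; constructor.
  exact: (IH _ _ _ _ (inserted_at_map (ty_shift 0) ins) (typing_shift_ty 0 s_typ)).
- move=> G A B tr cls _ IHr uniq_cls _ IHcl k U ts s ins s_typ /=; rewrite cl_subst_tmE.
  constructor; [|by rewrite cl_ops_map|].
    exact: (IHr _ _ _ _ (inserted_at_cons _ ins) (typing_weaken _ s_typ)).
  move=> o _ /(@cl_in_map O) [tO -> cl_tO].
  apply: (IHcl _ _ cl_tO _ _ _ _ (inserted_at_cons _ (inserted_at_cons _ ins))).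
  exact: typing_weaken (typing_weaken _ s_typ).
- move=> G mA mB t A wf_mu _ IH k U ts s ins s_typ /=; constructor => //.
  exact: (IH _ _ _ _ ins (typing_shift_co s_typ (inserted_at0 _ _))).
- move=> G t1 t2 A B _ IH1 _ IH2 k U ts s ins s_typ /=; econstructor; first exact: IH1 ins s_typ.
  exact: (IH2 _ _ _ _ (inserted_at_cons _ ins) (typing_weaken _ s_typ)).
- move=> G o t1 t2 B _ IH1 _ IH2 k U ts s ins s_typ /=; econstructor; first exact: IH1 ins s_typ.
  exact: (IH2 _ _ _ _ (inserted_at_cons _ ins) (typing_weaken _ s_typ)).
- move=> G t1 t2 A B _ IH1 _ IH2 k U ts s ins s_typ /=; econstructor; first exact: IH1 ins s_typ.
  exact: (IH2 _ _ _ _ (inserted_at_cons _ ins) (typing_weaken _ s_typ)).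
Qed.

Lemma typing_subst_ty n k S G t A : ctx_nty G = n.+1 -> k <= n -> wf_ty n S ->
  typing sig G t A -> typing sig (ctx_subst_ty k S G) (tm_subst_ty k S t) (ty_subst k S A).
Proof.
move=> nty_G le_kn wfS t_typ; elim: t_typ n k S nty_G le_kn wfS => {G t A};
  try by intros => /=; econstructor; eauto.
- by move=> G x A lookup_x *; constructor; rewrite lookup_map lookup_x.
- move=> G A B t wfA _ IH n k S nty_G le_kn wfS /=; constructor; last exact: (IH n).
  exact: (wf_ty_ctx_subst nty_G).
- move=> G t A _ IH n k S nty_G le_kn wfS /=; constructor.
  rewrite ext_ty_subst ?nty_G //; apply: (IH n.+1) => //=; first by rewrite nty_G.
  exact: wf_ty_shift.
- move=> G t A B wfA _ IH n k S nty_G le_kn wfS /=; rewrite ty_subst_subst //.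
  constructor; last exact: (IH n).
  exact: (wf_ty_ctx_subst nty_G).
- move=> G t g A B _ IH g_typ n k S nty_G le_kn wfS /=; econstructor; first exact: (IH n).
  exact: (co_typing_subst_ty nty_G le_kn wfS g_typ).
- move=> G A B tr cls _ IHr uniq_cls _ IHcl n k S nty_G le_kn wfS /=; rewrite cl_subst_tyE.
  constructor; [exact: (IHr n) | by rewrite cl_ops_map |].
  move=> o _ /(@cl_in_map O) [tO -> cl_tO]; have [sb1 sb2] := sig_subst k S o.
  by have := IHcl _ _ cl_tO n k S nty_G le_kn wfS; rewrite !ctx_subst_ty_ext_tm /= sb1 sb2.
- move=> G mA mB t A [wfA wfB] _ IH n k S nty_G le_kn wfS /=; constructor; last exact: (IH n).
  by split; apply: (wf_ty_ctx_subst nty_G).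
- move=> G t g mA mB A _ IH g_typ n k S nty_G le_kn wfS /=; econstructor; first exact: (IH n).
  exact: (co_typing_subst_ty nty_G le_kn wfS g_typ).
- by move=> G t1 t2 A B _ IH1 _ IH2 n *; econstructor; [exact: (IH1 n) | exact: (IH2 n)].
- move=> G o t1 t2 B _ IH1 _ IH2 n k S nty_G le_kn wfS /=; have [sb1 sb2] := sig_subst k S o.
  rewrite sb2; constructor; first by rewrite -sb1; exact: (IH1 n).
  by have := IH2 n k S nty_G le_kn wfS; rewrite ctx_subst_ty_ext_tm sb2.
- by move=> G t1 t2 A B _ IH1 _ IH2 n *; econstructor; [exact: (IH1 n) | exact: (IH2 n)].
Qed.

Lemma typing_subst_co k nu G cs h t A : typing sig G t A ->
  inserted_at k nu (ctx_co G) cs -> co_typing (Ctx (ctx_nty G) cs (ctx_tm G)) h nu ->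
  typing sig (Ctx (ctx_nty G) cs (ctx_tm G)) (tm_subst_co k h t) A.
Proof.
move=> t_typ ins h_typ; elim: t_typ k nu cs h ins h_typ => {G t A};
  try by intros => /=; econstructor; eauto using co_typing_tm_irrel.
- move=> G A B t wfA _ IH k nu cs h ins h_typ /=; constructor => //.
  exact: (IH _ _ _ _ ins (co_typing_ext_tm _ h_typ)).
- move=> G t A _ IH k nu cs h ins h_typ /=; constructor.
  exact: (IH _ _ _ _ (inserted_at_map (cty_shift 0) ins) (co_typing_shift_ty 0 h_typ)).
- by move=> G t g A B _ IH g_typ k nu cs h ins h_typ /=; econstructor;
    [exact: IH ins h_typ | exact: co_typing_subst_co g_typ ins h_typ].
- move=> G A B tr cls _ IHr uniq_cls _ IHcl k nu cs h ins h_typ /=; rewrite cl_subst_coE.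
  constructor; [|by rewrite cl_ops_map|].
    exact: (IHr _ _ _ _ ins (co_typing_ext_tm _ h_typ)).
  move=> o _ /(@cl_in_map O) [tO -> cl_tO].
  exact: (IHcl _ _ cl_tO _ _ _ _ ins (co_typing_tm_irrel _ h_typ)).
- move=> G mA mB t A wf_mu _ IH k nu cs h ins h_typ /=; constructor => //.
  exact: (IH _ _ _ _ (inserted_at_cons _ ins) (co_typing_shift_co h_typ (inserted_at0 _ _))).
- by move=> G t g mA mB A _ IH g_typ k nu cs h ins h_typ /=; econstructor;
    [exact: IH ins h_typ | exact: co_typing_subst_co g_typ ins h_typ].
- move=> G t1 t2 A B _ IH1 _ IH2 k nu cs h ins h_typ /=; econstructor; first exact: IH1 ins h_typ.
  exact: (IH2 _ _ _ _ ins (co_typing_ext_tm _ h_typ)).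
- move=> G o t1 t2 B _ IH1 _ IH2 k nu cs h ins h_typ /=; econstructor; first exact: IH1 ins h_typ.
  exact: (IH2 _ _ _ _ ins (co_typing_ext_tm _ h_typ)).
- move=> G t1 t2 A B _ IH1 _ IH2 k nu cs h ins h_typ /=; econstructor; first exact: IH1 ins h_typ.
  exact: (IH2 _ _ _ _ ins (co_typing_ext_tm _ h_typ)).
Qed.

Lemma typing_weaken1 X Y G t A :
  typing sig (ext_tm G Y) t A -> typing sig (ext_tm (ext_tm G X) Y) (tm_shift_tm 1 t) A.
Proof.
case: G => n cs ts t_typ.
exact: (typing_shift_tm t_typ (inserted_at_cons _ (inserted_at0 _ _))).
Qed.

Lemma typing_subst_tm0 U G s t A :
  typing sig (ext_tm G U) t A -> typing sig G s U -> typing sig G (tm_subst_tm 0 s t) A.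
Proof. by case: G => n cs ts t_typ; exact: (typing_subst_tm t_typ (inserted_at0 _ _)). Qed.

Lemma typing_subst_ty0 S G t A : wf_ty_ctx G S ->
  typing sig (ext_ty G) t A -> typing sig G (tm_subst_ty 0 S t) (ty_subst 0 S A).
Proof. by move=> wfS t_typ; rewrite -(ext_tyK S G); exact: typing_subst_ty wfS t_typ. Qed.

Lemma typing_subst_co0 mu G h t A :
  co_typing G h mu -> typing sig (ext_co G mu) t A -> typing sig G (tm_subst_co 0 h t) A.
Proof. by case: G => n cs ts h_typ t_typ; exact: (typing_subst_co t_typ (inserted_at0 _ _)). Qed.

Lemma wf_op_result G o : wf_ty_ctx G (sig o).2.
Proof. exact: wf_ty_le (leq0n _) (sig_closed o).2. Qed.

Lemma typing_resumption G Y h t A B :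
  typing sig G h (THand A B) -> typing sig (ext_tm G Y) t (TComp A) -> wf_ty_ctx G Y ->
  typing sig G (Lam Y (With (tm_shift_tm 0 h) t)) (TArr Y (TComp B)).
Proof. by move=> h_typ t_typ wfY; constructor => //; apply: T_With t_typ; exact: typing_weaken. Qed.

Lemma typing_forward_op G h A B o v t :
  typing sig G h (THand A B) -> typing sig G v (sig o).1 ->
  typing sig (ext_tm G (sig o).2) t (TComp A) ->
  typing sig G (OpCall o v (sig o).2 (With (tm_shift_tm 0 h) t)) (TComp B).
Proof.
by move=> h_typ v_typ t_typ; constructor => //; apply: T_With t_typ; exact: typing_weaken.
Qed.

Lemma typing_handle_op G A B tr cls o v t tO :
  typing sig G (Hand A tr cls) (THand A B) -> cl_find o cls = Some tO ->
  typing sig G v (sig o).1 -> typing sig (ext_tm G (sig o).2) t (TComp A) ->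
  typing sig G (tm_subst_tm 0 v (tm_subst_tm 0
    (tm_shift_tm 0 (Lam (sig o).2 (With (tm_shift_tm 0 (Hand A tr cls)) t))) tO)) (TComp B).
Proof.
move=> hand_typ /cl_find_in cl_tO v_typ t_typ.
have k_typ := typing_resumption hand_typ t_typ (wf_op_result G o).
apply: (typing_subst_tm0 _ v_typ); apply: (typing_subst_tm0 _ (typing_weaken _ k_typ)).
by inversion hand_typ; auto.
Qed.

End Typing.

Ltac head_is_constructor t :=
  lazymatch t with ?f _ => head_is_constructor f | _ => is_constructor t end.

Ltac invert_typing :=
  repeat match goal with
  | H : typing _ _ ?t _ |- _ => head_is_constructor t; inversion H; clear H; subst
  | H : co_typing _ ?g _ |- _ => head_is_constructor g; inversion H; clear H; subst
  end.

Theorem theorem7p1 (O : eqType) (sig : O -> ty * ty)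
  (sig_closed : forall o, wf_ty 0 (sig o).1 /\ wf_ty 0 (sig o).2)
  (G : ctx) (t t' : tm O) (A : ty) :
  typing sig G t A -> step t t' -> typing sig G t' A.
Proof.
move=> t_typ st; elim: st G A t_typ => {t t'}; intros; invert_typing.
all: try by apply: (typing_handle_op sig_closed) => //; constructor.
all: try by apply: typing_forward_op; last eassumption; [repeat econstructor; eauto | done].
all: by repeat econstructor; eauto using typing_subst_tm0, typing_subst_ty0, typing_subst_co0,
  typing_weaken1, co_typing_subst_ty0, co_typing_ext_tm.
Qed.
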